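(* Every private information distinguishing debate game $(A,S,P,C_w,C_l)$ has a policy with error at most $$\mathbb E_{s\sim P}\left[\begin{cases}\frac{|C_l(s)|}{|C_w(s)|+|C_l(s)|} & C_w(s)\cup C_l(s)\neq\emptyset\\ \frac12 & C_w(s)\cup C_l(s)=\emptyset\end{cases}\right].$$
   Context: Let $\delta$ be a special default action. A PIDDG is a tuple $(A,S,P,C_w,C_l)$ with $A$ finite, $\delta\notin A$, $S$ finite, $P$ a probability mass function on $S$, and $C_w,C_l:S\to\mathcal P(A)$. A policy is $M:\{1,2\}\times(A\cup\{\delta\})^2\to[0,1]$ with $M(1,a_1,a_2)+M(2,a_1,a_2)=1$. $G_1(B,M)$ is the following Bayesian game with agents $1,2$. Each agent has action set $A\cup\{\delta\}$ and type set $\mathcal P(A)$. A scenario $s\sim P$ is drawn, and agent 1 gets type $C_w(s)$ while agent 2 gets type $C_l(s)$. Payoffs are as follows: - if both agents play available actions ($a_i\in t_i\cup\{\delta\}$), agent $i$ gets $M(i,a_1,a_2)$; - if exactly one plays an unavailable action, it gets $0$ and the other gets $1$; - if both play unavailable actions, each gets $1/2$. $G_2(B,M)$ is the same with types swapped (agent 1 gets $C_l(s)$, agent 2 gets $C_w(s)$). The error is $\frac{v_1(G_2(B,M))+v_2(G_1(B,M))}{2}$, where $v_i$ is the value of the zero-sum Bayesian game to agent $i$. *)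

From HB Require Import structures.
From mathcomp Require Import all_boot all_order all_algebra.
From mathcomp Require Import all_classical all_reals.
Set Implicit Arguments. Unset Strict Implicit. Unset Printing Implicit Defensive.
Import Order.TTheory GRing.Theory Num.Theory.
Local Open Scope ring_scope.

(* Actions: [option A], where [None] is the default action delta (so delta \notin A).
   Agents 1,2 are the ordinals 0,1 of 'I_2. Types are subsets of A. *)

Section PIDDG.
Variables (R : realType) (A S : finType).

Definition is_policy (M : 'I_2 -> option A -> option A -> R) : Prop :=
  (forall i a1 a2, 0 <= M i a1 a2 <= 1) /\
  (forall a1 a2, M ord0 a1 a2 + M ord_max a1 a2 = 1).

Definition available (t : {set A}) (a : option A) : bool :=
  if a is Some x then x \in t else true.

Definition payoff (M : 'I_2 -> option A -> option A -> R) (i : 'I_2)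
  (t1 t2 : {set A}) (a1 a2 : option A) : R :=
  match available t1 a1, available t2 a2 with
  | true, true => M i a1 a2
  | true, false => if i == ord0 then 1 else 0
  | false, true => if i == ord0 then 0 else 1
  | false, false => 1 / 2
  end.

Definition is_strategy (sigma : {set A} -> option A -> R) : Prop :=
  (forall t a, 0 <= sigma t a) /\ (forall t, \sum_(a : option A) sigma t a = 1).

Definition exp_payoff (P : S -> R) (T1 T2 : S -> {set A})
  (M : 'I_2 -> option A -> option A -> R) (i : 'I_2)
  (sigma1 sigma2 : {set A} -> option A -> R) : R :=
  \sum_(s : S) P s * \sum_(a1 : option A) \sum_(a2 : option A)
     sigma1 (T1 s) a1 * sigma2 (T2 s) a2 * payoff M i (T1 s) (T2 s) a1 a2.

Definition value1 P T1 T2 M : R :=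
  sup [set x | exists2 s1, is_strategy s1 &
        x = inf [set y | exists2 s2, is_strategy s2 & y = exp_payoff P T1 T2 M ord0 s1 s2]].

Definition value2 P T1 T2 M : R :=
  sup [set x | exists2 s2, is_strategy s2 &
        x = inf [set y | exists2 s1, is_strategy s1 & y = exp_payoff P T1 T2 M ord_max s1 s2]].

(* G_1(B,M): agent 1 gets C_w(s), agent 2 gets C_l(s); G_2 swapped. *)
Definition error (P : S -> R) (Cw Cl : S -> {set A}) M : R :=
  (value1 P Cl Cw M + value2 P Cw Cl M) / 2.

Definition error_bound (P : S -> R) (Cw Cl : S -> {set A}) : R :=
  \sum_(s : S) P s *
    (if Cw s :|: Cl s != finset.set0
     then #|Cl s|%:R / (#|Cw s| + #|Cl s|)%:R
     else 1 / 2).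

End PIDDG.

(* Order the two copies A * {true, false} of the actions linearly and let agent 1's
   action a beat agent 2's action b iff (a, true) comes before (b, false).  The agent
   holding C_w(s) answers with its earliest action in its own copy; the opponent then
   wins only if the earliest element of the copies of C_l(s) and C_w(s) is a copy of an
   action of C_l(s).  Under a uniformly random order this happens with probability
   |C_l(s)| / (|C_w(s)| + |C_l(s)|), and choosing the order one element at a time by
   conditional expectations yields a fixed order that does at least as well. *)

From HB Require Import structures.
From mathcomp Require Import all_boot all_order all_algebra.
From mathcomp Require Import all_classical all_reals.
From mathcomp Require Import ring lra.
Import Order.TTheory GRing.Theory Num.Theory.
Set Implicit Arguments. Unset Strict Implicit. Unset Printing Implicit Defensive.
Local Open Scope ring_scope.

Fixpoint first_in {X : finType} (s : seq X) (U Z : {set X}) : bool :=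
  if s is x :: s' then (if x \in Z then x \in U else first_in s' U Z) else false.

Lemma first_in_before (X : finType) (s : seq X) (U V : {set X}) u :
  u \in U -> u \in s -> (forall v, v \in V -> (index u s < index v s)%N) ->
  first_in s U (U :|: V).
Proof.
move=> uU; elim: s => [|x s IH] //=; rewrite inE => /predU1P[ux|us] u_first.
  by rewrite -ux inE uU.
have xV : x \notin V.
  by apply/negP => /u_first; rewrite eqxx ltn0.
rewrite inE (negbTE xV) orbF; case: ifP => // xU; apply: IH => // v /u_first.
case: eqP => [xu|_]; first by move: uU; rewrite -xu xU.
by case: eqP => [_|_]; rewrite ?ltn0 ?ltnS.
Qed.

Lemma exists_le_of_sum_le (R : realDomainType) (T : finType) (Y : {set T})
    (g : T -> R) c :
  Y != finset.set0 -> \sum_(x in Y) g x <= #|Y|%:R * c ->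
  exists2 x, x \in Y & g x <= c.
Proof.
move=> /set0Pn[y yY] sum_le.
have [/exists_inP[x xY gx]|/exists_inPn gt_c] := boolP [exists x in Y, g x <= c].
  by exists x.
suff : #|Y|%:R * c < \sum_(x in Y) g x by rewrite ltNge sum_le.
rewrite mulr_natl -sumr_const; apply: ltr_sum => [|x xY]; first by apply/hasP; exists y.
by rewrite ltNge gt_c.
Qed.

Section Derandomization.
Variables (R : realFieldType) (X I : finType) (U Z : I -> {set X}).
Hypothesis subUZ : forall i, U i \subset Z i.

(* The probability that a uniformly random ordering of [Y] meets [Z i] first inside
   [U i]; it is [0 / 0 = 0] when [Z i] misses [Y], as is [first_in]. *)
Definition ratio_in (Y : {set X}) (i : I) : R :=
  #|U i :&: Y|%:R / #|Z i :&: Y|%:R.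

Lemma ratio_in_ge0 (Y : {set X}) i : 0 <= ratio_in Y i.
Proof. by rewrite divr_ge0. Qed.

Lemma ratio_in_setD1 (Y : {set X}) i x : x \notin Z i -> ratio_in (Y :\ x) i = ratio_in Y i.
Proof.
move=> xZ; have xU : x \notin U i by apply: contra xZ; apply: fintype.subsetP.
suff drop_x (B : {set X}) : x \notin B -> B :&: (Y :\ x) = B :&: Y.
  by rewrite /ratio_in !drop_x.
move=> xB; apply/setP => y; rewrite !inE.
by case: eqVneq => [->|] //=; rewrite (negbTE xB).
Qed.

(* Total probability over the first element [x] of the random ordering. *)
Lemma sum_ratio_in_setD1 (Y : {set X}) i :
  \sum_(x in Y) (if x \in Z i then (x \in U i)%:R else ratio_in (Y :\ x) i)
  = #|Y|%:R * ratio_in Y i.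
Proof.
rewrite (bigID (mem (Z i))) /=.
rewrite (eq_bigr (fun x => (x \in U i)%:R)) => [|x /andP[_ ->]] //.
rewrite (eq_bigr (fun=> ratio_in Y i)) => [|x /andP[_ xZ]]; last first.
  by rewrite (negbTE xZ) ratio_in_setD1.
have -> : \sum_(x in Y | x \in Z i) ((x \in U i)%:R : R) = #|U i :&: Y|%:R.
  rewrite -sum1_card natr_sum big_mkcond [RHS]big_mkcond /=.
  apply: eq_bigr => x _; rewrite !inE.
  case xU: (x \in U i); last by case: (_ && _).
  by rewrite (fintype.subsetP (subUZ i) x xU) andbT.
rewrite sumr_const -(cardsID (Z i) Y) (finset.setIC Y) natrD mulrDl /ratio_in.
have -> : #|[pred x in Y | x \notin Z i]| = #|Y :\: Z i|.
  by apply: eq_card => x; rewrite !inE andbC.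
rewrite [X in _ = _ + X]mulr_natl; congr (_ + _).
have [Z0|Zn0] := eqVneq #|Z i :&: Y| 0%N; last by rewrite mulrCA mulfV ?pnatr_eq0 ?mulr1.
have U0 : #|U i :&: Y| = 0%N.
  by apply/eqP; rewrite -leqn0 -Z0 subset_leq_card // finset.setSI.
by rewrite U0 Z0 !mul0r.
Qed.

Lemma exists_seq_first_in_le (Y : {set X}) (p : I -> R) : (forall i, 0 <= p i) ->
  exists2 s : seq X, {subset Y <= s} &
    \sum_i p i * (first_in s (U i) (Z i))%:R <= \sum_i p i * ratio_in Y i.
Proof.
move: p; have [n] := ubnP #|Y|; elim: n Y => // n IH Y cardY p p_ge0.
have [->|Yn0] := eqVneq Y finset.set0.
  exists [::] => [x|]; first by rewrite inE.
  rewrite big1 => [|i _]; last by rewrite mulr0.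
  by apply: sumr_ge0 => i _; rewrite mulr_ge0 ?ratio_in_ge0.
pose cost_after x i :=
  if x \in Z i then (x \in U i)%:R else ratio_in (Y :\ x) i.
have [x xY cost_x] : exists2 x, x \in Y &
    \sum_i p i * cost_after x i <= \sum_i p i * ratio_in Y i.
  apply: exists_le_of_sum_le Yn0 _; rewrite exchange_big mulr_sumr.
  by apply: ler_sum => i _; rewrite -mulr_sumr sum_ratio_in_setD1 mulrCA.
pose p' i := if x \in Z i then 0 else p i.
have [||s Ys first_le] := IH (Y :\ x) _ p'.
- by rewrite (cardsD1 x) xY in cardY.
- by move=> i; rewrite /p'; case: ifP.
exists (x :: s) => [y yY|].
  by rewrite inE; case: eqVneq => //= yx; apply: Ys; rewrite !inE yx.
apply: le_trans cost_x.
pose decided i := if x \in Z i then p i * (x \in U i)%:R else 0.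
have -> : \sum_i p i * (first_in (x :: s) (U i) (Z i))%:R =
    \sum_i decided i + \sum_i p' i * (first_in s (U i) (Z i))%:R.
  rewrite -big_split; apply: eq_bigr => i _; rewrite /decided /p' /=.
  by case: ifP; rewrite ?mul0r ?addr0 ?add0r.
have -> : \sum_i p i * cost_after x i =
    \sum_i decided i + \sum_i p' i * ratio_in (Y :\ x) i.
  rewrite -big_split; apply: eq_bigr => i _; rewrite /decided /p' /cost_after /=.
  by case: ifP; rewrite ?mul0r ?addr0 ?add0r.
by rewrite lerD2l.
Qed.

End Derandomization.

Lemma sup_inf_le (R : realType) (T : Type) (St : T -> Prop) (f : T -> T -> R) B :
  (exists t, St t) -> (forall a b, St a -> St b -> 0 <= f a b) ->
  (forall a, St a -> exists2 b, St b & f a b <= B) ->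
  sup [set x | exists2 a, St a & x = inf [set y | exists2 b, St b & y = f a b]] <= B.
Proof.
move=> [t St_t] f_ge0 le_B; apply: ge_sup => [|_ [a St_a ->]].
  by exists (inf [set y | exists2 b, St b & y = f t b]); exists t.
have [b St_b fab] := le_B a St_a; apply: le_trans fab; apply: ge_inf; last by exists b.
by exists 0 => _ [b' St_b' ->]; apply: f_ge0.
Qed.

Section BayesianGame.
Variables (R : realType) (A S : finType).
Implicit Types (M : 'I_2 -> option A -> option A -> R) (t : {set A}).

Definition pure (g : {set A} -> option A) : {set A} -> option A -> R :=
  fun t a => (a == g t)%:R.

Lemma pure_strategy g : is_strategy (pure g).
Proof.
split=> [t a|t]; first by rewrite ler0n.
by rewrite (bigD1 (g t)) //= /pure eqxx big1 ?addr0 // => a /negbTE ->.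
Qed.

Lemma pure_gt0 g t a : 0 < pure g t a -> a = g t.
Proof. by rewrite /pure; case: eqP => // _; rewrite ltxx. Qed.

Lemma payoff_ge0 M i t1 t2 a1 a2 : is_policy M -> 0 <= payoff M i t1 t2 a1 a2.
Proof.
move=> [M01 _]; have /andP[M_ge0 _] := M01 i a1 a2; rewrite /payoff.
by case: (available t1 a1); case: (available t2 a2) => //; try case: ifP => _; lra.
Qed.

Lemma payoff_le1 M i t1 t2 a1 a2 : is_policy M -> payoff M i t1 t2 a1 a2 <= 1.
Proof.
move=> [M01 _]; have /andP[_ M_le1] := M01 i a1 a2; rewrite /payoff.
by case: (available t1 a1); case: (available t2 a2) => //; try case: ifP => _; lra.
Qed.

Variables (P : S -> R) (T1 T2 : S -> {set A}).
Hypothesis P_ge0 : forall s, 0 <= P s.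

Lemma exp_payoff_ge0 M i s1 s2 : is_policy M -> is_strategy s1 -> is_strategy s2 ->
  0 <= exp_payoff P T1 T2 M i s1 s2.
Proof.
move=> M_pol [s1_ge0 _] [s2_ge0 _]; apply: sumr_ge0 => s _.
rewrite mulr_ge0 //; apply: sumr_ge0 => a1 _; apply: sumr_ge0 => a2 _.
by rewrite !mulr_ge0 ?payoff_ge0.
Qed.

Lemma exp_payoff_le M i s1 s2 (c : S -> R) : is_strategy s1 -> is_strategy s2 ->
  (forall s a1 a2, 0 < s1 (T1 s) a1 -> 0 < s2 (T2 s) a2 ->
     payoff M i (T1 s) (T2 s) a1 a2 <= c s) ->
  exp_payoff P T1 T2 M i s1 s2 <= \sum_s P s * c s.
Proof.
move=> [s1_ge0 s1_sum1] [s2_ge0 s2_sum1] le_c; apply: ler_sum => s _.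
rewrite ler_wpM2l //.
have -> : c s = \sum_a1 \sum_a2 s1 (T1 s) a1 * s2 (T2 s) a2 * c s.
  under eq_bigr do rewrite -mulr_suml -mulr_sumr s2_sum1 mulr1.
  by rewrite -mulr_suml s1_sum1 mul1r.
apply: ler_sum => a1 _; apply: ler_sum => a2 _.
have := s1_ge0 (T1 s) a1; rewrite le_eqVlt => /predU1P[<-|pos1]; first by rewrite !mul0r.
have := s2_ge0 (T2 s) a2; rewrite le_eqVlt => /predU1P[<-|pos2]; first by rewrite !(mulr0, mul0r).
by rewrite ler_wpM2l ?mulr_ge0 ?le_c // ltW.
Qed.

End BayesianGame.

Section OrderPolicy.
Variables (R : realType) (A : finType).

Definition tagged (T : {set A}) (c : bool) : {set A * bool} := finset.setX T [set c].

Lemma mem_tagged T c a c' : ((a, c') \in tagged T c) = (a \in T) && (c' == c).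
Proof. by rewrite !inE. Qed.

Lemma card_tagged T c : #|tagged T c| = #|T|.
Proof. by rewrite cardsX cards1 muln1. Qed.

Lemma card_taggedU T T' c : #|tagged T c :|: tagged T' (~~ c)| = (#|T| + #|T'|)%N.
Proof.
rewrite cardsU !card_tagged; suff -> : tagged T c :&: tagged T' (~~ c) = finset.set0.
  by rewrite cards0 subn0.
by apply/setP => -[a c']; rewrite !inE; case: c c' => [] []; rewrite ?andbF.
Qed.

Fixpoint pick_first (s : seq (A * bool)) (c : bool) (t : {set A}) : option A :=
  if s is x :: s' then (if (x.2 == c) && (x.1 \in t) then Some x.1 else pick_first s' c t)
  else None.

Lemma pick_first_some s c t b : pick_first s c t = Some b ->
  b \in t /\ forall b', b' \in t -> (index (b, c) s <= index (b', c) s)%N.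
Proof.
elim: s => [|[x xc] s IH] //=.
case: ifP => [/andP[/eqP -> xt] [<-]|x_nfirst /IH[bt b_first]].
  by split => // b' _; rewrite eqxx.
split => // b' b't.
case: eqP => [[xb xcc]|_]; first by move: x_nfirst; rewrite xb xcc eqxx bt.
case: eqP => [[xb xcc]|_]; first by move: x_nfirst; rewrite xb xcc eqxx b't.
exact: b_first.
Qed.

Lemma pick_first_none s c t : pick_first s c t = None ->
  forall b, b \in t -> (b, c) \notin s.
Proof.
elim: s => [|[x xc] s IH] //= + b bt.
case: ifP => // x_nfirst /IH /(_ b bt) bs.
rewrite inE negb_or bs andbT; apply/eqP => -[xb xcc].
by move: x_nfirst; rewrite -xb -xcc eqxx bt.
Qed.

Section FixedOrder.
Variable sq : seq (A * bool).

Definition order_win (a1 a2 : option A) : R :=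
  match a1, a2 with
  | Some a, Some b => if (index (a, true) sq < index (b, false) sq)%N then 1 else 0
  | Some _, None => 1
  | None, Some _ => 0
  | None, None => 1 / 2
  end.

Definition order_policy (i : 'I_2) (a1 a2 : option A) : R :=
  if i == ord0 then order_win a1 a2 else 1 - order_win a1 a2.

Lemma order_policyP : is_policy order_policy.
Proof.
have win01 a1 a2 : 0 <= order_win a1 a2 <= 1.
  by case: a1 a2 => [a|] [b|] /=; try case: ifP => _; apply/andP; split; lra.
split=> [i a1 a2|a1 a2]; rewrite /order_policy; have /andP[? ?] := win01 a1 a2.
  by case: ifP => _; apply/andP; split; lra.
by rewrite eqxx /=; lra.
Qed.

Definition first_win (c : bool) (L W : {set A}) : bool :=
  first_in sq (tagged L c) (tagged L c :|: tagged W (~~ c)).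

Definition first_cost (c : bool) (L W : {set A}) : R :=
  if W :|: L == finset.set0 then 1 / 2 else (first_win c L W)%:R.

Hypothesis sq_all : forall x, x \in sq.

Lemma pick_first_none_set0 c t : pick_first sq c t = None -> t = finset.set0.
Proof.
move=> /pick_first_none none; apply/setP => b; rewrite inE.
by apply/negbTE/negP => /none; rewrite sq_all.
Qed.

Lemma payoff1_pick_first_le (L W : {set A}) a1 :
  payoff order_policy ord0 L W a1 (pick_first sq false W) <= first_cost true L W.
Proof.
rewrite /first_cost /first_win finset.setU_eq0.
case pick: (pick_first sq false W) => [b|].
  have [bW b_first] := pick_first_some pick.
  have -> : (W == finset.set0) = false by apply/negbTE/set0Pn; exists b.
  rewrite /payoff /= bW /order_policy /=.
  case: a1 => [a|] /=; last by rewrite ler0n.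
  case: ifP => aL; last by rewrite ler0n.
  case: ifP => a_first; last by rewrite ler0n.
  rewrite (first_in_before (u := (a, true))) ?mem_tagged ?aL //.
  move=> [b' c']; rewrite mem_tagged => /andP[b'W /eqP ->].
  exact: leq_trans a_first (b_first b' b'W).
rewrite (pick_first_none_set0 pick) eqxx /=.
case: (eqVneq L finset.set0) => [->|/set0Pn[a aL]] /=.
  by rewrite /payoff /order_policy; case: a1 => [a|] /=; rewrite ?inE /=; lra.
rewrite (first_in_before (u := (a, true))) ?mem_tagged ?aL //.
- exact/payoff_le1/order_policyP.
- by move=> [b c]; rewrite mem_tagged inE.
Qed.

Lemma payoff2_pick_first_le (L W : {set A}) a2 :
  payoff order_policy ord_max W L (pick_first sq true W) a2 <= first_cost false L W.
Proof.
rewrite /first_cost /first_win finset.setU_eq0.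
case pick: (pick_first sq true W) => [a|].
  have [aW a_first] := pick_first_some pick.
  have -> : (W == finset.set0) = false by apply/negbTE/set0Pn; exists a.
  rewrite /payoff /= aW /order_policy /=.
  case: a2 => [b|] /=; last by rewrite subrr ler0n.
  case: ifP => bL; last by rewrite ler0n.
  case: ifP => a_before; first by rewrite subrr ler0n.
  have b_before : (index (b, false) sq < index (a, true) sq)%N.
    rewrite ltn_neqAle leqNgt a_before andbT.
    by apply/eqP => /(index_inj (b, false) (sq_all _) (sq_all _)).
  rewrite (first_in_before (u := (b, false))) ?mem_tagged ?bL ?subr0 //.
  move=> [a' c']; rewrite mem_tagged => /andP[a'W /eqP ->].
  exact: leq_trans b_before (a_first a' a'W).
rewrite (pick_first_none_set0 pick) eqxx /=.
case: (eqVneq L finset.set0) => [->|/set0Pn[b bL]] /=.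
  by rewrite /payoff /order_policy; case: a2 => [b|] /=; rewrite ?inE /=; lra.
rewrite (first_in_before (u := (b, false))) ?mem_tagged ?bL //.
- exact/payoff_le1/order_policyP.
- by move=> [a c]; rewrite mem_tagged inE.
Qed.

End FixedOrder.
End OrderPolicy.

Section OrderPolicyError.
Variables (R : realType) (A S : finType) (P : S -> R) (Cw Cl : S -> {set A}).
Hypothesis P_ge0 : forall s, 0 <= P s.

Definition mean_cost (sq : seq (A * bool)) (s : S) : R :=
  (first_cost R sq true (Cl s) (Cw s) + first_cost R sq false (Cl s) (Cw s)) / 2.

Lemma error_order_policy_le (sq : seq (A * bool)) : (forall x, x \in sq) ->
  error P Cw Cl (order_policy R sq) <= \sum_s P s * mean_cost sq s.
Proof.
move=> sq_all; have pol := order_policyP R sq.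
have ex_strategy : exists s1 : {set A} -> option A -> R, is_strategy s1.
  by exists (pure R (fun=> None)); apply: pure_strategy.
have v1 : value1 P Cl Cw (order_policy R sq) <=
    \sum_s P s * first_cost R sq true (Cl s) (Cw s).
  apply: (sup_inf_le (f := fun s1 s2 => exp_payoff P Cl Cw (order_policy R sq) ord0 s1 s2)) => //.
    by move=> s1 s2 s1P s2P; apply: exp_payoff_ge0.
  move=> s1 s1P; exists (pure R (pick_first sq false)); first exact: pure_strategy.
  apply: exp_payoff_le => // [|s a1 a2 _ /pure_gt0 ->]; first exact: pure_strategy.
  exact: payoff1_pick_first_le.
have v2 : value2 P Cw Cl (order_policy R sq) <=
    \sum_s P s * first_cost R sq false (Cl s) (Cw s).
  apply: (sup_inf_le (f := fun s2 s1 => exp_payoff P Cw Cl (order_policy R sq) ord_max s1 s2)) => //.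
    by move=> s2 s1 s2P s1P; apply: exp_payoff_ge0.
  move=> s2 s2P; exists (pure R (pick_first sq true)); first exact: pure_strategy.
  apply: exp_payoff_le => // [|s a1 a2 /pure_gt0 -> _]; first exact: pure_strategy.
  exact: payoff2_pick_first_le.
rewrite (eq_bigr (fun s => P s * first_cost R sq true (Cl s) (Cw s) / 2 +
                          P s * first_cost R sq false (Cl s) (Cw s) / 2)); last first.
  by move=> s _; rewrite /mean_cost; ring.
by rewrite big_split /= -!mulr_suml /error; lra.
Qed.

Lemma mean_first_cost_le (sq : seq (A * bool)) (L W : {set A}) :
  (first_cost R sq true L W + first_cost R sq false L W) / 2 +
    #|L|%:R / (#|L| + #|W|)%:R <=
  (if W :|: L != finset.set0 then #|L|%:R / (#|W| + #|L|)%:R else 1 / 2) +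
    ((first_win sq true L W)%:R + (first_win sq false L W)%:R) / 2.
Proof.
rewrite /first_cost; case: eqP => [WL0|_] /=; last by rewrite addnC; lra.
have /andP[_ /eqP ->] : (W == finset.set0) && (L == finset.set0).
  by rewrite -finset.setU_eq0 WL0.
have win_ge0 c : 0 <= (first_win sq c finset.set0 W)%:R :> R by rewrite ler0n.
have := win_ge0 true; have := win_ge0 false; rewrite cards0 mul0r; lra.
Qed.

Lemma exists_order_mean_cost_le : exists2 sq : seq (A * bool),
  (forall x, x \in sq) & \sum_s P s * mean_cost sq s <= error_bound P Cw Cl.
Proof.
pose U (i : S * bool) := tagged (Cl i.1) i.2.
pose Z (i : S * bool) := tagged (Cl i.1) i.2 :|: tagged (Cw i.1) (~~ i.2).
have p_ge0 (i : S * bool) : 0 <= P i.1 / 2 by rewrite divr_ge0 ?P_ge0.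
have subUZ i : U i \subset Z i by apply: finset.subsetUl.
have [sq sq_all first_le] := exists_seq_first_in_le subUZ [set: A * bool] p_ge0.
exists sq => [x|]; first by apply: sq_all; rewrite inE.
pose q s : R := #|Cl s|%:R / (#|Cl s| + #|Cw s|)%:R.
pose win_mean s : R := ((first_win sq true (Cl s) (Cw s))%:R +
                        (first_win sq false (Cl s) (Cw s))%:R) / 2.
have sum_pairs (F : S * bool -> R) : \sum_i F i = \sum_s (F (s, true) + F (s, false)).
  rewrite (eq_bigr (fun s => \sum_c F (s, c))) => [|s _]; last by rewrite big_bool.
  by rewrite pair_bigA; apply: eq_bigr => -[].
have win_le : \sum_s P s * win_mean s <= \sum_s P s * q s.
  move: first_le; rewrite !sum_pairs.
  rewrite [X in X <= _ -> _](eq_bigr (fun s => P s * win_mean s)) => [|s _].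
    rewrite [X in _ <= X -> _](eq_bigr (fun s => P s * q s)) // => s _.
    by rewrite /ratio_in !finset.setIT /U /Z !card_taggedU !card_tagged /q /= -mulrDl -splitr.
  by rewrite /win_mean /first_win /U /Z /=; ring.
have pointwise : \sum_s P s * mean_cost sq s + \sum_s P s * q s <=
    error_bound P Cw Cl + \sum_s P s * win_mean s.
  rewrite -!big_split; apply: ler_sum => s _ /=.
  by rewrite -!mulrDr ler_wpM2l ?P_ge0 // mean_first_cost_le.
lra.
Qed.

End OrderPolicyError.

Unset Implicit Arguments.

Theorem theorem5p3 (R : realType) (A S : finType) (P : S -> R)
  (P_ge0 : forall s, 0 <= P s) (P_sum1 : \sum_(s : S) P s = 1)
  (Cw Cl : S -> {set A}) :
  exists M : 'I_2 -> option A -> option A -> R,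
    is_policy M /\ error P Cw Cl M <= error_bound P Cw Cl.
Proof.
have [sq sq_all cost_le] := exists_order_mean_cost_le Cw Cl P_ge0.
exists (order_policy R sq); split; first exact: order_policyP.
exact: le_trans (error_order_policy_le Cw Cl P_ge0 sq_all) cost_le.
Qed.
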